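(* Let $\mathcal R=\langle \mathbf G_o,\mathbf G_{in},\mathbf c_o,\mathbf c_{in},\mathcal P_o,\mathcal P_{in},\mathbf r,\mathbf A_o,\mathbf A_{in},\mathbf b_o,\mathbf b_{in}\rangle\subseteq\mathbb R^n$ be an RCG with $\mathbf G_o\in\mathbb R^{n\times p}$, and let $\mathcal{CG}=\langle \mathbf c_{\text{ccg}},\mathbf G_{\text{ccg}},\mathcal J_{\text{ccg}},\mathcal P_{\text{ccg}},\mathbf A_{\text{ccg}},\mathbf b_{\text{ccg}}\rangle\subseteq\mathbb R^n$ be a CCG with partition $\{\mathcal L_1,\dots,\mathcal L_{k_{\text{ccg}}}\}$ and norms $\{s_1,\dots,s_{k_{\text{ccg}}}\}$. Set $\tilde{\boldsymbol\beta}=[\boldsymbol\beta^T\ \boldsymbol\gamma^T]^T$, $\Pi_\beta=[I_p\ \ 0]$, $\tilde{\mathbf G}=[\mathbf G_o\ \ \mathbf 0]$, $$\tilde{\mathbf A}=\begin{bmatrix}\mathbf A_o&\mathbf 0\\ \mathbf 0&\mathbf A_{\text{ccg}}\\ \mathbf G_o&-\mathbf G_{\text{ccg}}\end{bmatrix},\qquad \tilde{\mathbf b}=\begin{bmatrix}\mathbf b_o\\ \mathbf b_{\text{ccg}}\\ \mathbf c_{\text{ccg}}-\mathbf c_o\end{bmatrix}.$$ Then $$\mathcal R\cap\mathcal{CG}=\Bigl\{\mathbf c_o+\tilde{\mathbf G}\tilde{\boldsymbol\beta}\ \Big|\ \|\boldsymbol\beta_{\mathcal J_i}\|_{p_i}\le1\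 (i=1,\dots,k_o),\ \|\boldsymbol\gamma_{\mathcal L_j}\|_{s_j}\le1\ (j=1,\dots,k_{\text{ccg}}),\ \tilde{\mathbf A}\tilde{\boldsymbol\beta}=\tilde{\mathbf b},$$ $$\nexists\boldsymbol\eta:\ \mathbf G_{in}\boldsymbol\eta=(\mathbf c_o-\mathbf c_{in})+\mathbf G_o\Pi_\beta\tilde{\boldsymbol\beta},\ \|\boldsymbol\eta_{\mathcal K_l}\|_{q_l}\le r_l\ (l=1,\dots,k_{in}),\ \mathbf A_{in}\boldsymbol\eta=\mathbf b_{in}\Bigr\},$$ so in particular $\mathcal R\cap\mathcal{CG}$ is again of RCG form.
   Context: A CCG $\langle \mathbf c,\mathbf G,\mathcal J,\mathcal P,\mathbf A,\mathbf b\rangle$ with $\mathbf G\in\mathbb R^{n\times m}$, $\mathcal J=\{\mathcal J_1,\dots,\mathcal J_k\}$ a partition of $\{1,\dots,m\}$, $\mathcal P=\{p_1,\dots,p_k\}\subset[1,\infty]$, is the set $\{\mathbf c+\mathbf G\boldsymbol\beta:\|\boldsymbol\beta_{\mathcal J_i}\|_{p_i}\le1\ \forall i,\ \mathbf A\boldsymbol\beta=\mathbf b\}$ ($\boldsymbol\beta_{\mathcal J}$ the subvector indexed by $\mathcal J$). An RCG $\langle \mathbf G_o,\mathbf G_{in},\mathbf c_o,\mathbf c_{in},\mathcal P_o,\mathcal P_{in},\mathbf r,\mathbf A_o,\mathbf A_{in},\mathbf b_o,\mathbf b_{in}\rangle$ is the set $\mathcal{CG}_{\text{outer}}\setminus\mathcal{CG}_{\text{inner}}$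 with $\mathcal{CG}_{\text{outer}}=\{\mathbf c_o+\mathbf G_o\boldsymbol\beta:\|\boldsymbol\beta_{\mathcal J_i}\|_{p_i}\le1\ (i=1,\dots,k_o),\ \mathbf A_o\boldsymbol\beta=\mathbf b_o\}$ and $\mathcal{CG}_{\text{inner}}=\{\mathbf c_{in}+\mathbf G_{in}\boldsymbol\eta:\|\boldsymbol\eta_{\mathcal K_j}\|_{q_j}\le r_j\ (j=1,\dots,k_{in}),\ \mathbf A_{in}\boldsymbol\eta=\mathbf b_{in}\}$, where $\{\mathcal J_i\}$, $\{\mathcal K_j\}$ are partitions of the respective generator index sets, $\mathcal P_o=\{p_i\}$, $\mathcal P_{in}=\{q_j\}\subset[1,\infty]$, and $\mathbf r=(r_j)$ with $r_j\in[0,1)$. *)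

From HB Require Import structures.
From mathcomp Require Import all_boot all_order all_algebra.
From mathcomp Require Import boolp classical_sets reals constructive_ereal ereal exp.
Set Implicit Arguments. Unset Strict Implicit. Unset Printing Implicit Defensive.
Import Order.TTheory GRing.Theory Num.Theory.
Local Open Scope ring_scope.
Local Open Scope classical_set_scope.

Definition pnorm_on (R : realType) (m : nat) (P : pred 'I_m) (p : \bar R)
    (x : 'cV[R]_m) : R :=
  match p with
  | +oo%E => \big[Num.max/0]_(i | P i) `|x i ord0|
  | _ => (\sum_(i | P i) `|x i ord0| `^ (fine p)) `^ (fine p)^-1
  end.

(* A partition {J_1,...,J_k} of the generator indices 'I_m is encoded by the
   block-label map blk : 'I_m -> 'I_k (J_j = {i | blk i = j}). *)
Definition block_ball (R : realType) (m k : nat) (blk : 'I_m -> 'I_k)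
    (p : 'I_k -> \bar R) (rad : 'I_k -> R) (x : 'cV[R]_m) : Prop :=
  forall j : 'I_k, pnorm_on (fun i => blk i == j) (p j) x <= rad j.

Definition ccg_set (R : realType) (n m k q : nat) (c : 'cV[R]_n)
    (G : 'M[R]_(n, m)) (blk : 'I_m -> 'I_k) (p : 'I_k -> \bar R)
    (A : 'M[R]_(q, m)) (b : 'cV[R]_q) : set 'cV[R]_n :=
  [set x | exists beta : 'cV[R]_m,
     block_ball blk p (fun _ => 1) beta /\ A *m beta = b /\ x = c + G *m beta].

Definition ccg_r_set (R : realType) (n m k q : nat) (c : 'cV[R]_n)
    (G : 'M[R]_(n, m)) (blk : 'I_m -> 'I_k) (p : 'I_k -> \bar R)
    (r : 'I_k -> R) (A : 'M[R]_(q, m)) (b : 'cV[R]_q) : set 'cV[R]_n :=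
  [set x | exists eta : 'cV[R]_m,
     block_ball blk p r eta /\ A *m eta = b /\ x = c + G *m eta].

Definition rcg_set (R : realType) (n po ko qo mi ki qi : nat)
    (Go : 'M[R]_(n, po)) (Gin : 'M[R]_(n, mi)) (co cin : 'cV[R]_n)
    (Jo : 'I_po -> 'I_ko) (Po : 'I_ko -> \bar R)
    (Kin : 'I_mi -> 'I_ki) (Pin : 'I_ki -> \bar R) (r : 'I_ki -> R)
    (Ao : 'M[R]_(qo, po)) (Ain : 'M[R]_(qi, mi))
    (bo : 'cV[R]_qo) (bin : 'cV[R]_qi) : set 'cV[R]_n :=
  ccg_set co Go Jo Po Ao bo `\` ccg_r_set cin Gin Kin Pin r Ain bin.

From HB Require Import structures.
From mathcomp Require Import all_boot all_order all_algebra.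
From mathcomp Require Import boolp classical_sets reals constructive_ereal ereal exp.
Import Order.TTheory GRing.Theory Num.Theory.
Local Open Scope ring_scope.
Local Open Scope classical_set_scope.

(* Write the lifted parameter as [beta; gamma]. Then co + Go beta lies in the
   CCG exactly when some gamma satisfies the CCG constraints and
   co + Go beta = cc + Gc gamma, which is the last block row of At; the
   inner-set condition only depends on the point co + Go beta, so it can be
   carried along unchanged. *)

Lemma addr_eq_subr (V : zmodType) (a b c d : V) :
  a + b = c + d <-> b - d = c - a.
Proof.
split=> h; first by rewrite -(addKr a b) h addrA addrK addrC.
by rewrite -(subrK d b) h addrA [a + _]addrC subrK.
Qed.

Lemma addr_eq_addl (V : zmodType) (a b c d : V) :
  a + b = c + d <-> d = a - c + b.
Proof.
split=> [h|->]; last by rewrite addrA (addrCA c) subrr addr0.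
by rewrite -addrA (addrC (- c)) addrA h addrAC subrr add0r.
Qed.

Lemma mul_row_mx0 (R : pzRingType) (n p m k : nat) (A : 'M[R]_(n, p))
    (u : 'M_(p, k)) (v : 'M_(m, k)) :
  row_mx A 0 *m col_mx u v = A *m u.
Proof. by rewrite mul_row_col mul0mx addr0. Qed.

Lemma stacked_constraintsP (R : pzRingType) (n p m qo qc : nat)
    (Ao : 'M[R]_(qo, p)) (Ac : 'M[R]_(qc, m))
    (Go : 'M[R]_(n, p)) (Gc : 'M[R]_(n, m))
    (bo : 'cV[R]_qo) (bc : 'cV[R]_qc) (co cc : 'cV[R]_n)
    (beta : 'cV[R]_p) (gam : 'cV[R]_m) :
  col_mx (col_mx (row_mx Ao 0) (row_mx 0 Ac)) (row_mx Go (- Gc))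
    *m col_mx beta gam = col_mx (col_mx bo bc) (cc - co)
  <-> [/\ Ao *m beta = bo, Ac *m gam = bc & co + Go *m beta = cc + Gc *m gam].
Proof.
rewrite !mul_col_mx mul_row_mx0 !mul_row_col mul0mx add0r mulNmx.
split=> [/eq_col_mx[/eq_col_mx[-> ->] /(@addr_eq_subr _ co) hx] | [-> -> hx]] //.
by move/(@addr_eq_subr _ co): hx => ->.
Qed.

Lemma ccg_r_set_shiftE (R : realType) (n mi ki qi : nat) (cin c v : 'cV[R]_n)
    (Gin : 'M[R]_(n, mi)) (Kin : 'I_mi -> 'I_ki) (Pin : 'I_ki -> \bar R)
    (r : 'I_ki -> R) (Ain : 'M[R]_(qi, mi)) (bin : 'cV[R]_qi) :
  ccg_r_set cin Gin Kin Pin r Ain bin (c + v)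
  <-> exists eta, Gin *m eta = c - cin + v
        /\ block_ball Kin Pin r eta /\ Ain *m eta = bin.
Proof.
split=> [[eta [ball_eta [hA /addr_eq_addl heta]]] | [eta [heta [ball_eta hA]]]].
  by exists eta.
by exists eta; split; [|split; [|apply/addr_eq_addl]].
Qed.

Theorem proposition5 (R : realType) (n : nat)
    (* RCG data *)
    (p ko qo mi ki qi : nat)
    (Go : 'M[R]_(n, p)) (Gin : 'M[R]_(n, mi)) (co cin : 'cV[R]_n)
    (Jo : 'I_p -> 'I_ko) (Po : 'I_ko -> \bar R)
    (Kin : 'I_mi -> 'I_ki) (Pin : 'I_ki -> \bar R) (r : 'I_ki -> R)
    (Ao : 'M[R]_(qo, p)) (Ain : 'M[R]_(qi, mi))
    (bo : 'cV[R]_qo) (bin : 'cV[R]_qi)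
    (* CCG data *)
    (m kc qc : nat) (cc : 'cV[R]_n) (Gc : 'M[R]_(n, m))
    (L : 'I_m -> 'I_kc) (S : 'I_kc -> \bar R)
    (Ac : 'M[R]_(qc, m)) (bc : 'cV[R]_qc)
    (* standing assumptions *)
    (hPo : forall i, (1 <= Po i)%E) (hPin : forall j, (1 <= Pin j)%E)
    (hS : forall j, (1 <= S j)%E)
    (hr : forall j, 0 <= r j < 1) :
  let Gt : 'M[R]_(n, p + m) := row_mx Go 0 in
  let PiB : 'M[R]_(p, p + m) := row_mx 1%:M 0 in
  let At : 'M[R]_(qo + qc + n, p + m) :=
    col_mx (col_mx (row_mx Ao 0) (row_mx 0 Ac)) (row_mx Go (- Gc)) in
  let bt : 'cV[R]_(qo + qc + n) := col_mx (col_mx bo bc) (cc - co) in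
  rcg_set Go Gin co cin Jo Po Kin Pin r Ao Ain bo bin `&` ccg_set cc Gc L S Ac bc
  = [set x | exists btil : 'cV[R]_(p + m),
       x = co + Gt *m btil
       /\ block_ball Jo Po (fun _ => 1) (usubmx btil)
       /\ block_ball L S (fun _ => 1) (dsubmx btil)
       /\ At *m btil = bt
       /\ ~ (exists eta : 'cV[R]_mi,
               Gin *m eta = (co - cin) + Go *m (PiB *m btil)
               /\ block_ball Kin Pin r eta
               /\ Ain *m eta = bin)].
Proof.
move=> Gt PiB At bt; apply/seteqP; split=> x.
- case=> -[[beta [ball_beta [hAo ->]]] not_inner] [gam [ball_gam [hAc hx]]].
  exists (col_mx beta gam).
  rewrite /Gt /PiB !mul_row_mx0 mul1mx col_mxKu col_mxKd stacked_constraintsP.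
  by rewrite -ccg_r_set_shiftE.
- case=> btil; rewrite -[btil]vsubmxK.
  move: (usubmx btil) (dsubmx btil) => beta gam.
  rewrite /Gt /PiB !mul_row_mx0 mul1mx col_mxKu col_mxKd stacked_constraintsP.
  rewrite -ccg_r_set_shiftE.
  move=> [-> [ball_beta [ball_gam [[hAo hAc hx] not_inner]]]].
  by split; [split=> //; exists beta | exists gam].
Qed.
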